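(* Let $n\geq 2$ and let $C$ be a $2$-null CRC in $G_n$ with covering radius $\rho\geq 2$, $c_1\leq 2$, $c_2\geq 3$, and $\mathbf{0}\in C$. Then every word of type $1100$ lying in $C_2$ belongs to the interval graph $I(y)$ of some word $y\in C$ of weight four.
   Context: $G_n$ is the graph with vertex set $\mathbb{Z}^n$, $x\sim y$ iff $\sum_i|x_i-y_i|=1$; $d$ is its graph distance, weight of $x$ is $d(x,\mathbf{0})$. For a code $C$ with covering radius $\rho$, $C_i=\{v:d(v,C)=i\}$. $C$ is a CRC if for all $i,j$ every vertex of $C_i$ has the same number $\alpha_{ij}$ of neighbours in $C_j$, with $\alpha_{ij}=0$ for $|i-j|>1$; $a_i=\alpha_{ii}$, $b_i=\alpha_{i,i+1}$, $c_i=\alpha_{i,i-1}$. $C$ is $r$-null if $a_0=\cdots=a_{r-1}=0$. The type of a word of weight at most four is the nonincreasing sequence of its four largest absolute entry values; type $1100$ means exactly two entries $\pm1$, rest $0$. For a vertex $y$, the interval graph $I(y)$ is the subgraph of $G_n$ induced by $\{z: d(\mathbf{0},z)+d(z,y)=d(\mathbf{0},y)\}$. *)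

From mathcomp Require Import all_boot all_order all_algebra.
Set Implicit Arguments. Unset Strict Implicit. Unset Printing Implicit Defensive.
Import Order.TTheory GRing.Theory Num.Theory.

Definition vert (n : nat) := {ffun 'I_n -> int}.

Definition zero_word (n : nat) : vert n := [ffun => 0%R].

Definition dist n (x y : vert n) : nat := (\sum_(i < n) absz (x i - y i)%R)%N.

Definition weight n (x : vert n) : nat := dist x (zero_word n).

(* the 2n neighbours of v, indexed by (coordinate, sign) *)
Definition nb n (v : vert n) (p : 'I_n * bool) : vert n :=
  [ffun i => if i == p.1 then (if p.2 then v i + 1 else v i - 1)%R else v i].

Definition code n := vert n -> Prop.

Definition inC n (C : code n) (i : nat) (v : vert n) : Prop :=
  (exists c, C c /\ dist v c = i) /\ (forall c, C c -> (i <= dist v c)%N).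

Definition covering_radius n (C : code n) (rho : nat) : Prop :=
  (forall v, exists i, (i <= rho)%N /\ inC C i v) /\ (exists v, inC C rho v).

Definition nb_count n (C : code n) (j : nat) (v : vert n) (k : nat) : Prop :=
  exists S : {set 'I_n * bool}, #|S| = k /\ (forall p, p \in S <-> inC C j (nb v p)).

Definition is_CRC n (C : code n) (rho : nat) (alpha : nat -> nat -> nat) : Prop :=
  (forall i j, (i <= rho)%N -> (j <= rho)%N ->
     forall v, inC C i v -> nb_count C j v (alpha i j)) /\
  (forall i j, (i <= rho)%N -> (j <= rho)%N -> (j.+1 < i \/ i.+1 < j)%N -> alpha i j = 0%N).

Definition a_ (alpha : nat -> nat -> nat) i := alpha i i.
Definition b_ (alpha : nat -> nat -> nat) i := alpha i i.+1.
Definition c_ (alpha : nat -> nat -> nat) i := alpha i i.-1.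

Definition r_null (alpha : nat -> nat -> nat) (r : nat) : Prop :=
  forall i, (i < r)%N -> a_ alpha i = 0%N.

Definition type1100 n (x : vert n) : Prop :=
  exists i j : 'I_n, i != j /\ absz (x i) = 1%N /\ absz (x j) = 1%N /\
    (forall k, k != i -> k != j -> x k = 0%R).

Definition in_interval n (y z : vert n) : Prop :=
  (dist (zero_word n) z + dist z y)%N = dist (zero_word n) y.

From mathcomp Require Import all_boot all_order all_algebra.
From mathcomp Require Import zify.
Set Implicit Arguments. Unset Strict Implicit. Unset Printing Implicit Defensive.
Import Order.TTheory GRing.Theory Num.Theory.

(* Write x = e_p1 + e_p2 for unit steps p1, p2 along distinct coordinates.  As
   c_2 >= 3, x has a neighbour z = x + e_q in C_1 where q undoes neither p1 nor
   p2.  A codeword z + e_r where r undoes neither p1, p2 nor q (the last because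
   x is at distance 2 from C) has weight 4 and is at distance 2 from x, so it is
   the required y.  Otherwise the only codewords next to z are z - e_p1 and
   z - e_p2.  Since a_0 = 0, every unit word e_p lies in C_1; if z - e_p1 is a
   codeword then e_p2 sees the codewords 0 and z - e_p1, so c_1 >= 2 and both
   z - e_p1 and z - e_p2 are codewords; but then e_q sees the three codewords
   0, z - e_p2 and z - e_p1, contradicting c_1 <= 2. *)

Section Lattice.
Variable n : nat.
Implicit Types (u v w : vert n) (p q : 'I_n * bool).

Definition sg (b : bool) : int := if b then 1%R else (-1)%R.

Definition opp_dir p := (p.1, ~~ p.2).

Definition outward v p := (0 <= v p.1 * sg p.2)%R.

Definition walk v (ps : seq ('I_n * bool)) := foldl (@nb n) v ps.

Lemma nbE v p m : nb v p m = if m == p.1 then (v m + sg p.2)%R else v m.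
Proof. by rewrite ffunE; case: p.2. Qed.

Lemma nbC v p q : nb (nb v p) q = nb (nb v q) p.
Proof.
apply/ffunP => m; rewrite !nbE.
by case: (m == p.1); case: (m == q.1); rewrite // -!addrA [(sg _ + _)%R]addrC.
Qed.

Lemma nbK v p : nb (nb v p) (opp_dir p) = v.
Proof.
case: p => k s; apply/ffunP => m; rewrite !nbE.
by case: eqP => // _; case: s => /=; lia.
Qed.

Lemma dist_refl v : dist v v = 0.
Proof. by rewrite /dist big1 // => m _; rewrite subrr. Qed.

Lemma dist_sym v w : dist v w = dist w v.
Proof. by apply: eq_bigr => m _; rewrite distnC. Qed.

Lemma dist_triangle u v w : dist u w <= dist u v + dist v w.
Proof. by rewrite /dist -big_split /=; apply: leq_sum => m _; lia. Qed.

Lemma dist_eq0 v w : dist v w = 0 -> v = w.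
Proof.
move/eqP; rewrite sum_nat_eq0 => /forallP vw; apply/ffunP => m.
by move: (vw m) => /= /eqP; lia.
Qed.

Lemma dist_nb v p : dist v (nb v p) = 1.
Proof.
rewrite /dist (bigD1 p.1) //= big1 => [|m /negbTE mp]; rewrite nbE ?eqxx ?mp.
  by case: p.2 => /=; lia.
lia.
Qed.

Lemma weight_nb_outward v p : outward v p -> weight (nb v p) = (weight v).+1.
Proof.
rewrite /outward /weight /dist (bigD1 p.1) //= [in RHS](bigD1 p.1) //=.
rewrite nbE eqxx !ffunE !subr0.
rewrite (eq_bigr (fun m => absz (v m - zero_word n m))) => [|m /negbTE mp].
  by case: p => k s /= out; rewrite -addSn; congr (_ + _); case: s out => /=; lia.
by rewrite nbE mp.
Qed.

Lemma outward_nb v p q :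
  outward v p -> outward v q -> q != opp_dir p -> outward (nb v p) q.
Proof.
case: p => k s; case: q => m t; rewrite /outward /opp_dir /= nbE /=.
move=> out_p out_q; case: (m =P k) => [mk | //]; subst m.
by rewrite xpair_eqE eqxx /=; case: s t out_p out_q => [] [] /=; lia.
Qed.

Lemma weight_walk v ps :
  pairwise (fun p q => q != opp_dir p) ps -> all (outward v) ps ->
  weight (walk v ps) = weight v + size ps.
Proof.
elim: ps v => [|p ps IH] v /=; first by rewrite addn0.
case/andP=> /allP nopp_p nopp_ps /andP [out_p /allP out_ps].
rewrite IH // ?weight_nb_outward ?addSnnS //.
by apply/allP => q qps; apply: outward_nb; [|apply: out_ps|apply: nopp_p].
Qed.

Lemma weight_walk_zero ps :
  pairwise (fun p q => q != opp_dir p) ps -> weight (walk (zero_word n) ps) = size ps.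
Proof.
move=> ps_nopp; rewrite weight_walk //; first by rewrite /weight dist_refl.
by apply/allP => p _; rewrite /outward ffunE mul0r.
Qed.

Lemma eq_opp_dir p q : (opp_dir p == q) = (p == opp_dir q).
Proof. by case: p q => [k s] [m t]; rewrite !xpair_eqE eq_sym -eqbF_neg; case: s t => [] []. Qed.

Lemma nb_cancel v p q : nb (nb (nb v p) q) (opp_dir p) = nb v q.
Proof. by rewrite nbC nbK. Qed.

Lemma type1100_walk x : type1100 x ->
  exists p1 p2, p1.1 != p2.1 /\ x = nb (nb (zero_word n) p1) p2.
Proof.
case=> i [j [ij [xi [xj x0]]]]; exists (i, 0 < x i)%R, (j, 0 < x j)%R.
split=> //; apply/ffunP => m; rewrite !nbE !ffunE /=.
have [-> | mi] := eqVneq m i.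
  by rewrite ifN_eq //; case: (ltrP 0 (x i)) xi => /=; lia.
have [-> | mj] := eqVneq m j; first by case: (ltrP 0 (x j)) xj => /=; lia.
exact: x0.
Qed.

End Lattice.

Section Codes.
Variables (n : nat) (C : code n).
Implicit Types (v : vert n) (p : 'I_n * bool).

Lemma inC0 v : inC C 0 v <-> C v.
Proof.
split=> [[[c [Cc /dist_eq0 ->]] _] // | Cv].
by split=> //; exists v; rewrite dist_refl.
Qed.

Lemma inC1_nb c p : C c -> ~ C (nb c p) -> inC C 1 (nb c p).
Proof.
move=> Cc notC; split; first by exists c; rewrite dist_sym dist_nb.
by move=> c' Cc'; rewrite lt0n; apply: contra_notN notC => /eqP /dist_eq0 ->.
Qed.

Lemma nb_count_avoid j v k (T : {set 'I_n * bool}) :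
  nb_count C j v k -> #|T| < k -> exists2 p, p \notin T & inC C j (nb v p).
Proof.
case=> S [<- SP] TS; have : ~~ (S \subset T).
  by apply: contraTN TS => /subset_leq_card; rewrite -leqNgt.
by case/subsetPn => p /SP; exists p.
Qed.

Lemma nb_count_ge j v k (T : {set 'I_n * bool}) :
  nb_count C j v k -> (forall p, p \in T -> inC C j (nb v p)) -> #|T| <= k.
Proof. by case=> S [<- SP] TP; apply/subset_leq_card/subsetP => p /TP /SP. Qed.

Section CompletelyRegular.
Variables (rho : nat) (alpha : nat -> nat -> nat).
Hypotheses (rho_gt0 : 0 < rho) (C_CRC : is_CRC C rho alpha).
Hypotheses (a0 : a_ alpha 0 = 0) (C0 : C (zero_word n)).

Lemma codeword_nb_not_codeword c p : C c -> ~ C (nb c p).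
Proof.
move=> Cc Cnb; suff : #|[set p]| <= a_ alpha 0 by rewrite cards1 a0.
apply: (nb_count_ge (C_CRC.1 0 0 (leq0n _) (leq0n _) _ ((inC0 c).2 Cc))).
by move=> q /set1P ->; apply/inC0.
Qed.

Lemma unit_inC1 p : inC C 1 (nb (zero_word n) p).
Proof. exact/inC1_nb/codeword_nb_not_codeword. Qed.

Lemma c1_ge_card v (T : {set 'I_n * bool}) :
  inC C 1 v -> (forall p, p \in T -> C (nb v p)) -> #|T| <= c_ alpha 1.
Proof.
move=> v1 TP; apply: (nb_count_ge (C_CRC.1 1 0 rho_gt0 (leq0n _) _ v1)).
by move=> p /TP /inC0.
Qed.

Lemma inward_codeword_c1_gt1 p1 p2 q : q != opp_dir p2 ->
  C (nb (nb (nb (nb (zero_word n) p1) p2) q) (opp_dir p1)) -> 1 < c_ alpha 1.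
Proof.
(* [e_p2] sees the codewords [0] and [e_p2 + e_q]. *)
rewrite nbC nb_cancel => q2 Cp2q.
have := c1_ge_card (T := [set opp_dir p2; q]) (unit_inC1 p2).
by rewrite cards2 eq_sym q2; apply=> p /set2P [-> | ->] //; rewrite nbK.
Qed.

Lemma inward_codewords_c1_gt2 p1 p2 q : p1 != p2 -> q != opp_dir p1 -> q != opp_dir p2 ->
  C (nb (nb (nb (nb (zero_word n) p1) p2) q) (opp_dir p1)) ->
  C (nb (nb (nb (nb (zero_word n) p1) p2) q) (opp_dir p2)) -> 2 < c_ alpha 1.
Proof.
(* [e_q] sees the three codewords [0], [e_q + e_p1] and [e_q + e_p2]. *)
move=> p12 q1 q2 Cp2q Cp1q; rewrite nbC nb_cancel in Cp2q; rewrite nbC nbK in Cp1q.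
apply: leq_trans (c1_ge_card (T := [set opp_dir q; p1; p2]) (unit_inC1 q) _).
  apply/card_gt2P; exists (opp_dir q), p1, p2; rewrite !inE !eqxx ?orbT.
  have q1' : opp_dir q != p1 by rewrite eq_opp_dir.
  have q2' : p2 != opp_dir q by rewrite eq_sym eq_opp_dir.
  by rewrite q1' p12 q2'.
by move=> p; rewrite !inE => /orP [/orP [] |] /eqP ->; rewrite ?nbK // nbC.
Qed.

Hypothesis c1_le2 : c_ alpha 1 <= 2.

Lemma outer_codeword_nb p1 p2 q :
  p1.1 != p2.1 -> q != opp_dir p1 -> q != opp_dir p2 ->
  inC C 1 (nb (nb (nb (zero_word n) p1) p2) q) ->
  exists2 r, r \notin [set opp_dir p1; opp_dir p2] &
             C (nb (nb (nb (nb (zero_word n) p1) p2) q) r).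
Proof.
move=> p12 q1 q2 z1; have [S [cardS SP]] := C_CRC.1 1 0 rho_gt0 (leq0n _) _ z1.
have {}SP p : p \in S <-> C (nb (nb (nb (nb (zero_word n) p1) p2) q) p).
  by rewrite SP; apply: inC0.
have [/subsetP inward | /subsetPn [r /SP Cr r_out]] :=
  boolP (S \subset [set opp_dir p1; opp_dir p2]); last by exists r.
have c1_gt0 : 0 < c_ alpha 1.
  move: (c1_ge_card (T := [set opp_dir p1]) (unit_inC1 p1)); rewrite cards1; apply.
  by move=> p /set1P ->; rewrite nbK.
have [r rS] : exists r, r \in S by apply/card_gt0P; rewrite cardS.
have c1_gt1 : 1 < c_ alpha 1.
  case/set2P: (inward r rS) => r_eq; move: rS; rewrite r_eq => /SP.
    exact: inward_codeword_c1_gt1.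
  by rewrite [nb (nb _ p1) p2]nbC; apply: inward_codeword_c1_gt1.
have S_eq : S = [set opp_dir p1; opp_dir p2].
  apply/eqP; rewrite eqEcard; apply/andP; split; first exact/subsetP.
  by rewrite cards2 cardS (leq_trans _ c1_gt1) // ltnS leq_b1.
have p1p2 : p1 != p2 by apply: contraNneq p12 => ->.
have := inward_codewords_c1_gt2 p1p2 q1 q2 ((SP _).1 _) ((SP _).1 _).
rewrite S_eq !inE !eqxx ?orbT.
by move/(_ isT isT); rewrite ltnNge c1_le2.
Qed.

End CompletelyRegular.
End Codes.

Theorem mainTheorem3 (n : nat) (C : code n) (rho : nat) (alpha : nat -> nat -> nat) :
  (2 <= n)%N ->
  covering_radius C rho -> (2 <= rho)%N ->
  is_CRC C rho alpha -> r_null alpha 2 ->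
  (c_ alpha 1 <= 2)%N -> (3 <= c_ alpha 2)%N ->
  C (zero_word n) ->
  forall x : vert n, type1100 x -> inC C 2 x ->
    exists y : vert n, C y /\ weight y = 4%N /\ in_interval y x.
Proof.
move=> _ _ rho_ge2 C_CRC null2 c1_le2 c2_ge3 C0 _ /type1100_walk [p1 [p2 [p12 ->]]].
set x := nb (nb _ p1) p2 => x2.
have inward_small : #|[set opp_dir p1; opp_dir p2]| < c_ alpha 2.
  by rewrite cards2 (leq_trans _ c2_ge3) // !ltnS leq_b1.
have [q q_in z1] :=
  nb_count_avoid (C_CRC.1 2 1 rho_ge2 (ltnW rho_ge2) _ x2) inward_small.
move: q_in; rewrite !inE negb_or => /andP [q1 q2].
have [r r_in Cw] :=
  outer_codeword_nb (ltnW rho_ge2) C_CRC (null2 0 isT) C0 c1_le2 p12 q1 q2 z1.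
move: r_in; rewrite !inE negb_or => /andP [r1 r2].
have rq : r != opp_dir q.
  by apply: contraPneq Cw => ->; rewrite nbK => Cx; have := x2.2 x Cx; rewrite dist_refl.
have p21 : p2 != opp_dir p1 by apply: contraNneq p12 => ->.
have x_weight : weight x = 2.
  by rewrite (weight_walk_zero (ps := [:: p1; p2])) //= p21.
have w_weight : weight (nb (nb x q) r) = 4.
  by rewrite (weight_walk_zero (ps := [:: p1; p2; q; r])) //= p21 q1 q2 r1 r2 rq.
have dist_xw : dist x (nb (nb x q) r) = 2.
  apply/eqP; rewrite eqn_leq x2.2 // andbT.
  by rewrite -[2]/(1 + 1) -{1}(dist_nb x q) -(dist_nb (nb x q) r) dist_triangle.
exists (nb (nb x q) r); split=> //; split=> //.
rewrite /in_interval dist_xw !(dist_sym (zero_word n)).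
by rewrite -/(weight x) -/(weight (nb (nb x q) r)) x_weight w_weight.
Qed.
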